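(* Let $\alpha,a,b\in\mathbb{C}$ be such that none of $\alpha+a,\alpha-a,\alpha+b,\alpha-b$ belongs to $\{0,-1,-2,\ldots\}$. Then \[ \sum_{k=0}^{\infty}\frac{k+\alpha}{((k+\alpha)^2-a^2)((k+\alpha)^2-b^2)} =\frac12\sum_{n=1}^{\infty}\frac{(-1)^{n-1}(1\pm a\pm b)_{n-1}\bigl(5n^2-6n(1-\alpha)+2(1-\alpha)^2-a^2-b^2\bigr)}{n\binom{2n}{n}(\alpha\pm a)_n(\alpha\pm b)_n}. \]
   Context: $(x)_n=x(x+1)\cdots(x+n-1)$, $(x)_0=1$, is the Pochhammer symbol. The notation $(u\pm v\pm w)_m$ denotes the product of the four factors $(u+v+w)_m(u+v-w)_m(u-v+w)_m(u-v-w)_m$, and $(u\pm v)_m=(u+v)_m(u-v)_m$. *)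

From Stdlib Require Import Reals Factorial.
From Coquelicot Require Import Coquelicot.
Open Scope C_scope.

Fixpoint poch (x : C) (n : nat) : C :=
  match n with
  | O => 1
  | S m => poch x m * (x + RtoC (INR m))
  end.

Definition cbinom (n : nat) : R :=
  (INR (Factorial.fact (2 * n)) / (INR (Factorial.fact n) * INR (Factorial.fact n)))%R.

Definition lhs_term (alpha a b : C) (k : nat) : C :=
  let x := RtoC (INR k) + alpha in
  x / ((x * x - a * a) * (x * x - b * b)).

(* Right-hand summand (without the factor 1/2), n >= 1. *)
Definition rhs_term (alpha a b : C) (n : nat) : C :=
  let N := RtoC (INR n) in
  (Cpow (RtoC (-1)) (n - 1)
   * (poch (1 + a + b) (n - 1) * poch (1 + a - b) (n - 1)
      * poch (1 - a + b) (n - 1) * poch (1 - a - b) (n - 1))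
   * (5 * N * N - 6 * N * (1 - alpha) + 2 * (1 - alpha) * (1 - alpha)
      - a * a - b * b))
  / (N * RtoC (cbinom n)
     * (poch (alpha + a) n * poch (alpha - a) n)
     * (poch (alpha + b) n * poch (alpha - b) n)).

From Stdlib Require Import Reals Factorial Lia Lra.
From Coquelicot Require Import Coquelicot.
Open Scope C_scope.

(* Write F(x, n) := rhs_term x a b (n + 1).  It has a Wilf-Zeilberger partner G
   ([wz_partner]) with F(x, n) - F(x + 1, n) = G(x, n) - G(x, n + 1) and G(x, 0) = 2 lhs(x).
   Summing over the rectangle k < K, n < N gives
     2 sum_{k<K} lhs(alpha + k) = sum_{n<N} F(alpha, n) - sum_{n<N} F(alpha + K, n)
                                  + sum_{k<K} G(alpha + k, N).
   Each quotient |(y)_n / (x + k)_(n+1)| is at most C (9/8)^n / (k + n + 1),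
   while binom(2n, n) >= 2^n, so F(alpha + K, n) = O((9/8)^(4n) 2^(-n) / (K + 1)) and
   G(alpha + k, N) = O(1 / N^2).  With N = K + 1 both error terms are O(1 / K). *)

(* [psum f n] has the [n] terms f 0, ..., f (n - 1); Coquelicot's [sum_n f n] has n + 1. *)
Fixpoint psum (f : nat -> C) (n : nat) : C :=
  match n with O => 0 | S n => psum f n + f n end.

Lemma sum_n_psum (f : nat -> C) (n : nat) : sum_n f n = psum f (S n).
Proof.
  induction n as [|n IH].
  - rewrite sum_O. simpl. ring.
  - rewrite sum_Sn, IH. reflexivity.
Qed.

Lemma psum_ext (f g : nat -> C) (n : nat) :
  (forall j, f j = g j) -> psum f n = psum g n.
Proof. intro H. induction n as [|n IH]; simpl; [reflexivity | now rewrite IH, H]. Qed.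

Lemma psum_sub (f g : nat -> C) (n : nat) :
  psum (fun j => f j - g j) n = psum f n - psum g n.
Proof. induction n as [|n IH]; simpl; [ring | rewrite IH; ring]. Qed.

Lemma psum_telescope (h : nat -> C) (n : nat) :
  psum (fun j => h j - h (S j)) n = h O - h n.
Proof. induction n as [|n IH]; simpl; [ring | rewrite IH; ring]. Qed.

Lemma Cmod_psum_le_const (f : nat -> C) (c : R) (n : nat) :
  (forall j, Cmod (f j) <= c)%R -> (Cmod (psum f n) <= INR n * c)%R.
Proof.
  intro Hf. induction n as [|n IH]; simpl psum.
  - rewrite Cmod_0. simpl. lra.
  - rewrite S_INR. eapply Rle_trans; [apply Cmod_triangle|].
    generalize (Hf n). lra.
Qed.

Lemma Cmod_psum_le_geom (f : nat -> C) (c q : R) (n : nat) :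
  (0 <= c -> 0 <= q < 1 -> (forall j, Cmod (f j) <= c * q ^ j) ->
   Cmod (psum f n) <= c / (1 - q))%R.
Proof.
  intros Hc Hq Hf.
  assert (Hpart : (Cmod (psum f n) <= c * (1 - q ^ n) / (1 - q))%R).
  { induction n as [|n IH]; simpl psum.
    - rewrite Cmod_0. simpl. right. field. lra.
    - eapply Rle_trans; [apply Cmod_triangle|].
      replace (c * (1 - q ^ S n) / (1 - q))%R with (c * (1 - q ^ n) / (1 - q) + c * q ^ n)%R
        by (simpl; field; lra).
      generalize (Hf n). lra. }
  eapply Rle_trans; [exact Hpart|].
  assert (0 <= q ^ n)%R by (apply pow_le; lra).
  unfold Rdiv. apply Rmult_le_compat_r; [left; apply Rinv_0_lt_compat; lra | nra].
Qed.

Lemma ex_series_geom_bound (f : nat -> C) (c q : R) :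
  (0 <= q < 1)%R -> (forall n, Cmod (f n) <= c * q ^ n)%R -> ex_series f.
Proof.
  intros Hq Hf.
  apply (@ex_series_le C_AbsRing C_CompleteNormedModule f (fun n => c * q ^ n)%R); [exact Hf|].
  exists (c * / (1 - q))%R. apply (@is_series_scal_l R_AbsRing R_NormedModule).
  apply is_series_geom. rewrite Rabs_pos_eq; lra.
Qed.

Lemma is_series_of_close (f g : nat -> C) (l : C) (c : R) :
  is_series g l ->
  (forall n, Cmod (sum_n f n - sum_n g n) <= c / (INR n + 1))%R ->
  is_series f l.
Proof.
  intros Hg Hfg. unfold is_series in *.
  apply filterlim_locally_ball_norm. intro eps.
  destruct (proj1 (filterlim_locally_ball_norm _ _) Hg (pos_div_2 eps)) as [N0 HN0].
  destruct (INR_archimed (eps / 2) c) as [N1 HN1]; [apply is_pos_div_2|].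
  exists (max N0 N1). intros n Hn.
  specialize (HN0 n ltac:(lia)). unfold ball_norm in *. simpl in HN0.
  change (norm (minus (sum_n g n) l)) with (Cmod (sum_n g n - l)) in HN0.
  change (norm (minus (sum_n f n) l)) with (Cmod (sum_n f n - l)).
  assert (Hsmall : (c / (INR n + 1) < eps / 2)%R).
  { assert (INR N1 <= INR n) by (apply le_INR; lia).
    assert (Hn0 := pos_INR n). assert (He := cond_pos eps).
    apply Rmult_lt_reg_r with (INR n + 1)%R; [lra|].
    unfold Rdiv at 1. rewrite Rmult_assoc, Rinv_l, Rmult_1_r by lra. nra. }
  replace (sum_n f n - l) with ((sum_n f n - sum_n g n) + (sum_n g n - l)) by ring.
  eapply Rle_lt_trans; [apply Cmod_triangle|].
  generalize (Hfg n). lra.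
Qed.

Definition not_nonpos_int (y : C) : Prop := forall j : nat, y + RtoC (INR j) <> 0.

Lemma not_nonpos_int_of_neq (y : C) :
  (forall m : nat, y <> RtoC (- INR m)) -> not_nonpos_int y.
Proof.
  intros H m E. apply (H m). rewrite RtoC_opp.
  replace y with (y + RtoC (INR m) - RtoC (INR m)) by ring. rewrite E. ring.
Qed.

Lemma RtoC_neq0 (r : R) : r <> 0%R -> RtoC r <> 0.
Proof. intros H E. apply H. exact (f_equal fst E). Qed.

Lemma RtoC_INR_add (m n : nat) : RtoC (INR (m + n)) = RtoC (INR m) + RtoC (INR n).
Proof. now rewrite plus_INR, RtoC_plus. Qed.

Lemma not_nonpos_int_shift (y : C) (k : nat) :
  not_nonpos_int y -> not_nonpos_int (y + RtoC (INR k)).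
Proof. intros H j. rewrite <- Cplus_assoc, <- RtoC_INR_add. apply H. Qed.

Lemma poch_S (y : C) (n : nat) : poch y (S n) = poch y n * (y + RtoC (INR n)).
Proof. reflexivity. Qed.

Lemma poch_neq0 (y : C) (n : nat) : not_nonpos_int y -> poch y n <> 0.
Proof.
  intro H. induction n as [|n IH]; simpl.
  - exact C1_nz.
  - now apply Cmult_neq_0.
Qed.

Lemma poch_add1 (y : C) (n : nat) :
  y <> 0 -> poch (y + 1) n = poch y n * (y + RtoC (INR n)) / y.
Proof.
  intro Hy. induction n as [|n IH]; simpl poch.
  - simpl. field. exact Hy.
  - rewrite IH, S_INR, RtoC_plus. field. exact Hy.
Qed.

Lemma cbinom_S (m : nat) :
  cbinom (S m) = (cbinom m * (2 * (2 * INR m + 1)) / (INR m + 1))%R.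
Proof.
  unfold cbinom.
  replace (2 * S m)%nat with (S (S (2 * m))) by lia.
  rewrite !fact_simpl, !mult_INR, !S_INR, mult_INR.
  assert (0 < INR (fact m))%R by apply lt_0_INR, lt_O_fact.
  assert (0 <= INR m)%R by apply pos_INR.
  simpl INR. field. lra.
Qed.

Lemma RtoC_cbinom_S (m : nat) :
  RtoC (cbinom (S m)) =
  RtoC (cbinom m) * (2 * (2 * RtoC (INR m) + 1)) / (RtoC (INR m) + 1).
Proof.
  assert (0 <= INR m)%R by apply pos_INR.
  rewrite cbinom_S. unfold Rdiv, Cdiv.
  rewrite RtoC_mult, RtoC_inv, !RtoC_mult, !RtoC_plus, RtoC_mult by lra.
  reflexivity.
Qed.

Lemma cbinom_pos (m : nat) : (0 < cbinom m)%R.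
Proof.
  unfold cbinom.
  assert (0 < INR (fact m))%R by apply lt_0_INR, lt_O_fact.
  assert (0 < INR (fact (2 * m)))%R by apply lt_0_INR, lt_O_fact.
  apply Rdiv_lt_0_compat; nra.
Qed.

Lemma pow2_le_cbinom (n : nat) : (2 ^ n <= cbinom n)%R.
Proof.
  induction n as [|n IH].
  - unfold cbinom. simpl. lra.
  - rewrite cbinom_S. simpl pow.
    assert (0 <= INR n)%R by apply pos_INR.
    assert (Hc := cbinom_pos n).
    replace (cbinom n * (2 * (2 * INR n + 1)) / (INR n + 1))%R
      with (2 * cbinom n + 2 * cbinom n * INR n / (INR n + 1))%R by (field; lra).
    assert (0 <= 2 * cbinom n * INR n / (INR n + 1))%R
      by (apply Rdiv_le_0_compat; nra).
    lra.
Qed.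

Section WZPair.

Variables a b : C.

Definition admissible (x : C) : Prop :=
  not_nonpos_int (x + a) /\ not_nonpos_int (x - a) /\
  not_nonpos_int (x + b) /\ not_nonpos_int (x - b).

Lemma admissible_shift (x : C) (k : nat) :
  admissible x -> admissible (x + RtoC (INR k)).
Proof.
  intros (H1 & H2 & H3 & H4). unfold admissible.
  replace (x + RtoC (INR k) + a) with (x + a + RtoC (INR k)) by ring.
  replace (x + RtoC (INR k) - a) with (x - a + RtoC (INR k)) by ring.
  replace (x + RtoC (INR k) + b) with (x + b + RtoC (INR k)) by ring.
  replace (x + RtoC (INR k) - b) with (x - b + RtoC (INR k)) by ring.
  repeat split; now apply not_nonpos_int_shift.
Qed.

Definition poch_num (n : nat) : C :=
  poch (1 + a + b) n * poch (1 + a - b) n * poch (1 - a + b) n * poch (1 - a - b) n.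

Definition poch_den (x : C) (n : nat) : C :=
  (poch (x + a) n * poch (x - a) n) * (poch (x + b) n * poch (x - b) n).

Lemma poch_den_neq0 (x : C) (n : nat) : admissible x -> poch_den x n <> 0.
Proof.
  intros (H1 & H2 & H3 & H4). unfold poch_den.
  repeat apply Cmult_neq_0; now apply poch_neq0.
Qed.

Definition rhs_quad (x : C) (n : nat) : C :=
  let N := RtoC (INR n) in
  5 * N * N - 6 * N * (1 - x) + 2 * (1 - x) * (1 - x) - a * a - b * b.

Lemma rhs_term_S (x : C) (n : nat) :
  rhs_term x a b (S n) =
  Cpow (RtoC (-1)) n * poch_num n * rhs_quad x (S n)
  / (RtoC (INR (S n) * cbinom (S n)) * poch_den x (S n)).
Proof.
  unfold rhs_term, rhs_quad, poch_num, poch_den. cbv zeta.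
  replace (S n - 1)%nat with n by lia. rewrite RtoC_mult.
  unfold Cdiv. f_equal. f_equal. ring.
Qed.

Definition wz_partner (x : C) (n : nat) : C :=
  Cpow (RtoC (-1)) n * poch_num n * (2 * x + RtoC (INR n))
  / (RtoC (cbinom n) * poch_den x (S n)).

Lemma wz_pair (x : C) (n : nat) : admissible x ->
  rhs_term x a b (S n) - rhs_term (x + 1) a b (S n) = wz_partner x n - wz_partner x (S n).
Proof.
  intros (H1 & H2 & H3 & H4).
  assert (Z1 := H1 0%nat). assert (Z2 := H2 0%nat). assert (Z3 := H3 0%nat). assert (Z4 := H4 0%nat).
  simpl INR in Z1, Z2, Z3, Z4. rewrite Cplus_0_r in Z1, Z2, Z3, Z4.
  assert (S1 := H1 n). assert (S2 := H2 n). assert (S3 := H3 n). assert (S4 := H4 n).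
  assert (T1 := H1 (S n)). assert (T2 := H2 (S n)). assert (T3 := H3 (S n)). assert (T4 := H4 (S n)).
  rewrite S_INR, RtoC_plus in T1, T2, T3, T4.
  assert (P1 := poch_neq0 _ n H1). assert (P2 := poch_neq0 _ n H2).
  assert (P3 := poch_neq0 _ n H3). assert (P4 := poch_neq0 _ n H4).
  assert (HB : RtoC (cbinom n) <> 0) by (apply RtoC_neq0; generalize (cbinom_pos n); lra).
  assert (Hn : (0 <= INR n)%R) by apply pos_INR.
  assert (HN1 : RtoC (INR n) + 1 <> 0) by (rewrite <- RtoC_plus; apply RtoC_neq0; lra).
  assert (HN2 : 2 * RtoC (INR n) + 1 <> 0).
  { replace (2 * RtoC (INR n) + 1) with (RtoC (2 * INR n + 1)) by (now rewrite RtoC_plus, RtoC_mult).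
    apply RtoC_neq0; lra. }
  unfold rhs_term, wz_partner, poch_num, poch_den.
  replace (x + 1 + a) with ((x + a) + 1) by ring.
  replace (x + 1 - a) with ((x - a) + 1) by ring.
  replace (x + 1 + b) with ((x + b) + 1) by ring.
  replace (x + 1 - b) with ((x - b) + 1) by ring.
  rewrite !(poch_add1 _ _ Z1), !(poch_add1 _ _ Z2), !(poch_add1 _ _ Z3), !(poch_add1 _ _ Z4).
  replace (S n - 1)%nat with n by lia.
  rewrite RtoC_cbinom_S, !poch_S, Cpow_S, !S_INR, !RtoC_plus.
  field. repeat split; assumption.
Qed.

Lemma wz_partner_zero (x : C) : admissible x -> wz_partner x 0 = 2 * lhs_term x a b 0.
Proof.
  intros (H1 & H2 & H3 & H4).
  assert (Z1 := H1 0%nat). assert (Z2 := H2 0%nat). assert (Z3 := H3 0%nat). assert (Z4 := H4 0%nat).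
  simpl INR in Z1, Z2, Z3, Z4. rewrite Cplus_0_r in Z1, Z2, Z3, Z4.
  unfold wz_partner, lhs_term, poch_num, poch_den, cbinom. simpl.
  replace (RtoC (1 / (1 * 1))) with (RtoC 1) by (f_equal; field).
  assert (x * x - a * a <> 0)
    by (replace (x * x - a * a) with ((x + a) * (x - a)) by ring; now apply Cmult_neq_0).
  assert (x * x - b * b <> 0)
    by (replace (x * x - b * b) with ((x + b) * (x - b)) by ring; now apply Cmult_neq_0).
  field. repeat split; assumption.
Qed.

Lemma wz_telescope (x : C) (K N : nat) : admissible x ->
  psum (fun k => 2 * lhs_term x a b k) K =
  psum (fun n => rhs_term x a b (S n)) N
  - psum (fun n => rhs_term (x + RtoC (INR K)) a b (S n)) N
  + psum (fun k => wz_partner (x + RtoC (INR k)) N) K.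
Proof.
  intro Hx.
  set (h k := psum (fun n => rhs_term (x + RtoC (INR k)) a b (S n)) N).
  assert (Hrow : forall k, h k - h (S k) = wz_partner (x + RtoC (INR k)) O - wz_partner (x + RtoC (INR k)) N).
  { intro k. unfold h. rewrite <- psum_sub, <- psum_telescope.
    apply psum_ext. intro n.
    replace (x + RtoC (INR (S k))) with (x + RtoC (INR k) + 1) by (rewrite S_INR, RtoC_plus; ring).
    apply wz_pair, admissible_shift, Hx. }
  replace (psum (fun n => rhs_term x a b (S n)) N) with (h O) by (unfold h; simpl INR; now rewrite Cplus_0_r).
  fold (h K). rewrite <- psum_telescope.
  replace (psum (fun j => h j - h (S j)) K) with
    (psum (fun k => wz_partner (x + RtoC (INR k)) O) K - psum (fun k => wz_partner (x + RtoC (INR k)) N) K)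
    by (rewrite <- psum_sub; apply psum_ext; intro k; now rewrite Hrow).
  assert (Hdiag : psum (fun k => 2 * lhs_term x a b k) K = psum (fun k => wz_partner (x + RtoC (INR k)) O) K).
  { apply psum_ext. intro k. rewrite wz_partner_zero by now apply admissible_shift.
    unfold lhs_term. simpl INR. f_equal. f_equal; ring. }
  rewrite Hdiag. ring.
Qed.

End WZPair.

Section PochhammerGrowth.
Local Open Scope R_scope.

Lemma finite_pos_lower_bound (g : nat -> R) (N : nat) :
  (forall m, (m < N)%nat -> 0 < g m) ->
  exists d, 0 < d /\ forall m, (m < N)%nat -> d <= g m.
Proof.
  induction N as [|N IH]; intro Hg.
  - exists 1. split; [lra | intros m Hm; lia].
  - destruct IH as (d & Hd & H); [intros m Hm; apply Hg; lia|].
    exists (Rmin d (g N)). split.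
    + apply Rmin_pos; [exact Hd | apply Hg; lia].
    + intros m Hm. destruct (Nat.eq_dec m N) as [->|Hne].
      * apply Rmin_r.
      * apply Rle_trans with d; [apply Rmin_l | apply H; lia].
Qed.

Lemma Cmod_add_INR_le (y : C) (m : nat) : Cmod (y + RtoC (INR m)) <= Cmod y + INR m.
Proof.
  generalize (Cmod_triangle y (RtoC (INR m))).
  now rewrite Cmod_R, Rabs_pos_eq by apply pos_INR.
Qed.

Lemma Cmod_add_INR_ge (e : C) (m : nat) : INR m - Cmod e <= Cmod (e + RtoC (INR m)).
Proof.
  generalize (Cmod_triangle (e + RtoC (INR m)) (- e)). rewrite Cmod_opp.
  replace (e + RtoC (INR m) + - e)%C with (RtoC (INR m)) by ring.
  rewrite Cmod_R, Rabs_pos_eq by apply pos_INR. lra.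
Qed.

Lemma Cmod_add_INR_ge_linear (e : C) : not_nonpos_int e ->
  exists d, 0 < d /\ forall m : nat, d * (INR m + 1) <= Cmod (e + RtoC (INR m)).
Proof.
  intro He.
  destruct (INR_archimed 1 (2 * Cmod e + 1)) as [N HN]; [lra|]. rewrite Rmult_1_r in HN.
  destruct (finite_pos_lower_bound (fun m => Cmod (e + RtoC (INR m))) N) as (d & Hd & Hmin).
  { intros m _. apply Cmod_gt_0, He. }
  assert (He0 := Cmod_ge_0 e).
  exists (Rmin (1 / 2) (d / INR N)). split; [apply Rmin_pos; [lra | apply Rdiv_lt_0_compat; lra]|].
  intro m. assert (Hm := pos_INR m).
  destruct (Nat.lt_ge_cases m N) as [Hlt | Hge].
  - assert (INR m + 1 <= INR N) by (rewrite <- S_INR; apply le_INR; lia).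
    assert (d / INR N * INR N = d) by (field; lra).
    assert (0 <= d / INR N) by (apply Rdiv_le_0_compat; lra).
    assert (Hd' := Hmin m Hlt).
    apply Rle_trans with (d / INR N * (INR m + 1)); [apply Rmult_le_compat_r; [lra | apply Rmin_r]|].
    nra.
  - assert (INR N <= INR m) by (apply le_INR; lia).
    apply Rle_trans with (1 / 2 * (INR m + 1)); [apply Rmult_le_compat_r; [lra | apply Rmin_l]|].
    generalize (Cmod_add_INR_ge e m). lra.
Qed.

Lemma Cmod_poch_le (y z : C) (r D : R) (n0 : nat) :
  1 <= r -> 1 <= D ->
  (forall j, Cmod (y + RtoC (INR j)) <= D * Cmod (z + RtoC (INR j))) ->
  (forall j, (n0 <= j)%nat -> Cmod (y + RtoC (INR j)) <= r * Cmod (z + RtoC (INR j))) ->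
  forall n, Cmod (poch y n) <= D ^ n0 * r ^ n * Cmod (poch z n).
Proof.
  intros Hr HD Hall Htail n.
  assert (Hmin : Cmod (poch y n) <= D ^ Nat.min n n0 * r ^ n * Cmod (poch z n)).
  { induction n as [|n IH].
    - simpl. lra.
    - rewrite !poch_S, !Cmod_mult.
      assert (HDm : 0 <= D ^ Nat.min n n0 * r ^ n)
        by (apply Rmult_le_pos; apply pow_le; lra).
      assert (Hfac : exists c, 0 <= c /\
        Cmod (y + RtoC (INR n)) <= c * Cmod (z + RtoC (INR n)) /\
        D ^ Nat.min n n0 * r ^ n * c <= D ^ Nat.min (S n) n0 * r ^ S n).
      { destruct (Nat.lt_ge_cases n n0) as [Hlt | Hge].
        - exists D. split; [lra|]. split; [apply Hall|].
          replace (Nat.min (S n) n0) with (S (Nat.min n n0)) by lia.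
          change (D ^ S (Nat.min n n0)) with (D * D ^ Nat.min n n0).
          change (r ^ S n) with (r * r ^ n).
          assert (0 <= D ^ Nat.min n n0 * r ^ n * D) by nra. nra.
        - exists r. split; [lra|]. split; [now apply Htail|].
          replace (Nat.min (S n) n0) with (Nat.min n n0) by lia.
          change (r ^ S n) with (r * r ^ n). lra. }
      destruct Hfac as (c & Hc & Hyz & Hcoef).
      assert (Hz := Cmod_ge_0 (z + RtoC (INR n))).
      assert (Hpz := Cmod_ge_0 (poch z n)).
      apply Rle_trans with ((D ^ Nat.min n n0 * r ^ n * Cmod (poch z n)) * (c * Cmod (z + RtoC (INR n)))).
      + apply Rmult_le_compat; auto using Cmod_ge_0.
      + apply Rle_trans with ((D ^ Nat.min n n0 * r ^ n * c) * (Cmod (poch z n) * Cmod (z + RtoC (INR n))));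
          [right; ring|].
        rewrite <- !Rmult_assoc. apply Rmult_le_compat_r; [lra|]. nra. }
  apply Rle_trans with (1 := Hmin).
  assert (D ^ Nat.min n n0 <= D ^ n0) by (apply Rle_pow; [lra | lia]).
  assert (0 <= r ^ n) by (apply pow_le; lra).
  assert (Hpz := Cmod_ge_0 (poch z n)). apply Rmult_le_compat_r; [lra|]. nra.
Qed.

Lemma Cmod_shift_le_linear (y e : C) (d : R) (k j : nat) : 0 < d ->
  d * (INR k + INR j + 1) <= Cmod (e + RtoC (INR k) + RtoC (INR j)) ->
  Cmod (y + RtoC (INR j)) <= (Cmod y + 1) / d * Cmod (e + RtoC (INR k) + RtoC (INR j)).
Proof.
  intros Hd Hlin.
  assert (Hy := Cmod_ge_0 y). assert (Hk := pos_INR k). assert (Hj := pos_INR j).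
  assert (0 <= (Cmod y + 1) / d) by (apply Rdiv_le_0_compat; lra).
  apply Rle_trans with (Cmod y + INR j); [apply Cmod_add_INR_le|].
  apply Rle_trans with ((Cmod y + 1) / d * (d * (INR k + INR j + 1))).
  - replace ((Cmod y + 1) / d * (d * (INR k + INR j + 1)))
      with ((Cmod y + 1) * (INR k + INR j + 1)) by (field; lra). nra.
  - now apply Rmult_le_compat_l.
Qed.

Lemma Cmod_shift_le_tail (y e : C) (r : R) (k j : nat) : 0 <= r ->
  Cmod y + r * Cmod e <= INR j * (r - 1) ->
  Cmod (y + RtoC (INR j)) <= r * Cmod (e + RtoC (INR k) + RtoC (INR j)).
Proof.
  intros Hr Hj.
  assert (Hge : INR k + INR j - Cmod e <= Cmod (e + RtoC (INR k) + RtoC (INR j))).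
  { rewrite <- Cplus_assoc, <- RtoC_INR_add, <- plus_INR. apply Cmod_add_INR_ge. }
  assert (Hk := pos_INR k).
  apply Rle_trans with (Cmod y + INR j); [apply Cmod_add_INR_le|]. nra.
Qed.

Lemma poch_ratio_bound (y e : C) (r : R) : 1 < r -> not_nonpos_int e ->
  exists c, 0 < c /\ forall k n : nat,
    Cmod (poch y n) * (INR k + INR n + 1) <= c * r ^ n * Cmod (poch (e + RtoC (INR k)) (S n)).
Proof.
  intros Hr He.
  destruct (Cmod_add_INR_ge_linear e He) as (d & Hd & Hlin).
  assert (Hlin' : forall k j, d * (INR k + INR j + 1) <= Cmod (e + RtoC (INR k) + RtoC (INR j))).
  { intros k j. rewrite <- Cplus_assoc, <- RtoC_INR_add, <- plus_INR. apply Hlin. }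
  destruct (INR_archimed (r - 1) (Cmod y + r * Cmod e)) as [n0 Hn0]; [lra|].
  set (D := Rmax 1 ((Cmod y + 1) / d)).
  assert (HD1 : 1 <= D) by apply Rmax_l.
  exists (D ^ n0 / d). split; [apply Rdiv_lt_0_compat; [apply pow_lt|]; lra|].
  intros k n.
  assert (Hp : Cmod (poch y n) <= D ^ n0 * r ^ n * Cmod (poch (e + RtoC (INR k)) n)).
  { apply Cmod_poch_le; [lra | exact HD1 | |].
    - intro j. eapply Rle_trans; [apply (Cmod_shift_le_linear y e d k j Hd (Hlin' k j))|].
      apply Rmult_le_compat_r; [apply Cmod_ge_0 | apply Rmax_r].
    - intros j Hj. apply Cmod_shift_le_tail; [lra|].
      assert (INR n0 <= INR j) by now apply le_INR. nra. }
  rewrite poch_S, Cmod_mult.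
  set (A := D ^ n0 * r ^ n * Cmod (poch (e + RtoC (INR k)) n)) in *.
  assert (HA : 0 <= A).
  { unfold A. apply Rmult_le_pos; [apply Rmult_le_pos; apply pow_le|apply Cmod_ge_0]; lra. }
  apply Rle_trans with (A * (INR k + INR n + 1)).
  { apply Rmult_le_compat_r; [generalize (pos_INR k) (pos_INR n); lra | exact Hp]. }
  replace (D ^ n0 / d * r ^ n *
    (Cmod (poch (e + RtoC (INR k)) n) * Cmod (e + RtoC (INR k) + RtoC (INR n))))
    with (A / d * Cmod (e + RtoC (INR k) + RtoC (INR n))) by (unfold A; field; lra).
  replace (A * (INR k + INR n + 1)) with (A / d * (d * (INR k + INR n + 1))) by (field; lra).
  apply Rmult_le_compat_l; [apply Rdiv_le_0_compat; lra | apply Hlin'].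
Qed.

End PochhammerGrowth.

(* Any ratio r > 1 with r ^ 4 < 2 would do: the decay 2^-n of 1 / binom(2n, n) has to beat
   the four Pochhammer quotients. *)
Definition wz_ratio : R := ((9 / 8) ^ 4 / 2)%R.

Lemma wz_ratio_bounds : (0 <= wz_ratio < 1)%R.
Proof. unfold wz_ratio. simpl. lra. Qed.

Lemma wz_ratio_pow (n : nat) : (wz_ratio ^ n = ((9 / 8) ^ n) ^ 4 / 2 ^ n)%R.
Proof.
  unfold wz_ratio, Rdiv.
  rewrite Rpow_mult_distr, pow_inv, <- !pow_mult, Nat.mul_comm. reflexivity.
Qed.

Lemma Cmod_sub_le (u v : C) : (Cmod (u - v) <= Cmod u + Cmod v)%R.
Proof. unfold Cminus. rewrite <- (Cmod_opp v). apply Cmod_triangle. Qed.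

Lemma Cmod_RtoC_nonneg (r : R) : (0 <= r)%R -> Cmod (RtoC r) = r.
Proof. intro Hr. now rewrite Cmod_R, Rabs_pos_eq. Qed.

Lemma Rmult_le_compat_4 (x1 x2 x3 x4 y1 y2 y3 y4 : R) :
  (0 <= x1 -> 0 <= x2 -> 0 <= x3 -> 0 <= x4 ->
   x1 <= y1 -> x2 <= y2 -> x3 <= y3 -> x4 <= y4 ->
   x1 * x2 * x3 * x4 <= y1 * y2 * y3 * y4)%R.
Proof.
  intros. repeat apply Rmult_le_compat; auto; repeat apply Rmult_le_pos; auto.
Qed.

Section Estimates.
Local Open Scope R_scope.

Variables alpha a b : C.
Hypothesis Hadm : admissible a b alpha.

Lemma poch_num_bound : exists c, 0 < c /\ forall k n : nat,
  Cmod (poch_num a b n) * (INR k + INR n + 1) ^ 4 <=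
  c * ((9 / 8) ^ n) ^ 4 * Cmod (poch_den a b (alpha + RtoC (INR k)) (S n)).
Proof.
  destruct Hadm as (H1 & H2 & H3 & H4).
  destruct (poch_ratio_bound (1 + a + b) _ (9 / 8) ltac:(lra) H1) as (c1 & Hc1 & B1).
  destruct (poch_ratio_bound (1 + a - b) _ (9 / 8) ltac:(lra) H2) as (c2 & Hc2 & B2).
  destruct (poch_ratio_bound (1 - a + b) _ (9 / 8) ltac:(lra) H3) as (c3 & Hc3 & B3).
  destruct (poch_ratio_bound (1 - a - b) _ (9 / 8) ltac:(lra) H4) as (c4 & Hc4 & B4).
  exists (c1 * c2 * c3 * c4). split; [repeat apply Rmult_lt_0_compat; lra|].
  intros k n. unfold poch_num, poch_den.
  replace (alpha + RtoC (INR k) + a)%C with (alpha + a + RtoC (INR k))%C by ring.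
  replace (alpha + RtoC (INR k) - a)%C with (alpha - a + RtoC (INR k))%C by ring.
  replace (alpha + RtoC (INR k) + b)%C with (alpha + b + RtoC (INR k))%C by ring.
  replace (alpha + RtoC (INR k) - b)%C with (alpha - b + RtoC (INR k))%C by ring.
  rewrite !Cmod_mult.
  specialize (B1 k n). specialize (B2 k n). specialize (B3 k n). specialize (B4 k n).
  set (s := INR k + INR n + 1) in *.
  assert (Hs : 0 <= s) by (unfold s; generalize (pos_INR k) (pos_INR n); lra).
  assert (Hnn : forall y : C, 0 <= Cmod (poch y n) * s)
    by (intro y; apply Rmult_le_pos; [apply Cmod_ge_0 | exact Hs]).
  assert (Hprod := Rmult_le_compat_4 _ _ _ _ _ _ _ _ (Hnn _) (Hnn _) (Hnn _) (Hnn _) B1 B2 B3 B4).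
  eapply Rle_trans; [|eapply Rle_trans; [exact Hprod|]]; right; ring.
Qed.

Lemma Cmod_signed_quotient_le (cq : R) (X : C) (c : R) (k n : nat) :
  0 <= cq ->
  Cmod (poch_num a b n) * (INR k + INR n + 1) ^ 4 <=
    cq * ((9 / 8) ^ n) ^ 4 * Cmod (poch_den a b (alpha + RtoC (INR k)) (S n)) ->
  2 ^ n <= c ->
  Cmod (Cpow (RtoC (-1)) n * poch_num a b n * X
        / (RtoC c * poch_den a b (alpha + RtoC (INR k)) (S n)))
  <= cq * wz_ratio ^ n * Cmod X / (INR k + INR n + 1) ^ 4.
Proof.
  intros Hcq Hq Hc.
  assert (HP := poch_den_neq0 a b (alpha + RtoC (INR k)) (S n) (admissible_shift a b _ k Hadm)).
  assert (HY := proj1 (Cmod_gt_0 _) HP).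
  assert (H2n : 0 < 2 ^ n) by (apply pow_lt; lra).
  rewrite Cmod_div by (apply Cmult_neq_0; [apply RtoC_neq0; lra | exact HP]).
  rewrite !Cmod_mult, Cmod_pow, Cmod_R, Rabs_m1, pow1, Cmod_RtoC_nonneg by lra.
  set (Q := Cmod (poch_num a b n)) in *.
  set (Y := Cmod (poch_den a b (alpha + RtoC (INR k)) (S n))) in *.
  set (s := INR k + INR n + 1) in *.
  assert (Hs0 : 0 < s) by (unfold s; generalize (pos_INR k) (pos_INR n); lra).
  assert (Hs : 0 < s ^ 4) by (apply pow_lt; lra).
  assert (HZ := Cmod_ge_0 X). assert (HQ := Cmod_ge_0 (poch_num a b n)). fold Q in HQ.
  assert (Hrho : 0 <= ((9 / 8) ^ n) ^ 4) by (apply pow_le, pow_le; lra).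
  assert (Hratio : ((9 / 8) ^ n) ^ 4 <= wz_ratio ^ n * c).
  { rewrite wz_ratio_pow.
    replace (((9 / 8) ^ n) ^ 4 / 2 ^ n * c) with (((9 / 8) ^ n) ^ 4 * (c / 2 ^ n)) by (field; lra).
    assert (1 <= c / 2 ^ n) by (apply Rmult_le_reg_r with (2 ^ n); [lra|]; unfold Rdiv;
      rewrite Rmult_assoc, Rinv_l, Rmult_1_r, Rmult_1_l by lra; exact Hc).
    nra. }
  assert (Key : Q * s ^ 4 * Cmod X <= cq * wz_ratio ^ n * Cmod X * (c * Y)).
  { apply Rle_trans with (cq * ((9 / 8) ^ n) ^ 4 * Y * Cmod X); [apply Rmult_le_compat_r; assumption|].
    replace (cq * wz_ratio ^ n * Cmod X * (c * Y)) with (cq * (wz_ratio ^ n * c) * Y * Cmod X) by ring.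
    apply Rmult_le_compat_r; [assumption|]. apply Rmult_le_compat_r; [lra|].
    apply Rmult_le_compat_l; assumption. }
  replace (1 * Q * Cmod X / (c * Y)) with (Q * s ^ 4 * Cmod X / (c * Y * s ^ 4)) by (field; lra).
  replace (cq * wz_ratio ^ n * Cmod X / s ^ 4)
    with (cq * wz_ratio ^ n * Cmod X * (c * Y) / (c * Y * s ^ 4)) by (field; lra).
  unfold Rdiv. apply Rmult_le_compat_r; [|exact Key].
  left. apply Rinv_0_lt_compat. apply Rmult_lt_0_compat; [apply Rmult_lt_0_compat|]; lra.
Qed.

Lemma rhs_quad_bound : exists M, 0 <= M /\ forall m n : nat,
  Cmod (rhs_quad a b (alpha + RtoC (INR m)) (S n)) <= M * (INR m + INR n + 1) ^ 2.
Proof.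
  set (A := 1 + Cmod alpha).
  assert (HA : 1 <= A) by (unfold A; generalize (Cmod_ge_0 alpha); lra).
  assert (Ha := Cmod_ge_0 a). assert (Hb := Cmod_ge_0 b).
  exists (5 + 6 * A + 2 * A ^ 2 + Cmod a ^ 2 + Cmod b ^ 2). split; [nra|].
  intros m n. unfold rhs_quad. cbv zeta.
  set (s := INR m + INR n + 1).
  assert (Hs : 1 <= s) by (unfold s; generalize (pos_INR m) (pos_INR n); lra).
  set (N := RtoC (INR (S n))). set (u := (1 - (alpha + RtoC (INR m)))%C).
  assert (HN : Cmod N <= s).
  { unfold N. rewrite Cmod_RtoC_nonneg, S_INR by apply pos_INR.
    unfold s. generalize (pos_INR m). lra. }
  assert (Hu : Cmod u <= A * s).
  { unfold u. eapply Rle_trans; [apply Cmod_sub_le|]. rewrite Cmod_1.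
    eapply Rle_trans; [apply Rplus_le_compat_l, Cmod_triangle|].
    rewrite Cmod_RtoC_nonneg by apply pos_INR.
    unfold A, s. generalize (Cmod_ge_0 alpha) (pos_INR m) (pos_INR n). nra. }
  assert (HN0 := Cmod_ge_0 N). assert (Hu0 := Cmod_ge_0 u).
  eapply Rle_trans; [apply Cmod_sub_le|].
  eapply Rle_trans; [apply Rplus_le_compat_r, Cmod_sub_le|].
  eapply Rle_trans; [apply Rplus_le_compat_r, Rplus_le_compat_r, Cmod_triangle|].
  eapply Rle_trans; [apply Rplus_le_compat_r, Rplus_le_compat_r, Rplus_le_compat_r, Cmod_sub_le|].
  rewrite !Cmod_mult, !Cmod_RtoC_nonneg by lra.
  assert (Cmod N * Cmod N <= s * s) by nra.
  assert (Cmod N * Cmod u <= s * (A * s)) by nra.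
  assert (Cmod u * Cmod u <= (A * s) * (A * s)) by nra.
  assert (1 <= s * s) by nra.
  assert (Cmod a * Cmod a <= Cmod a ^ 2 * (s * s)) by nra.
  assert (Cmod b * Cmod b <= Cmod b ^ 2 * (s * s)) by nra.
  nra.
Qed.

Lemma rhs_term_bound : exists W, 0 <= W /\ forall m n : nat,
  Cmod (rhs_term (alpha + RtoC (INR m)) a b (S n)) <= W * wz_ratio ^ n / (INR m + 1).
Proof.
  destruct poch_num_bound as (cq & Hcq & Hq).
  destruct rhs_quad_bound as (M & HM & HMb).
  assert (Hθ := wz_ratio_bounds).
  exists (cq * M). split; [nra|]. intros m n.
  assert (Hn := pos_INR n). assert (Hm := pos_INR m).
  rewrite rhs_term_S.
  eapply Rle_trans; [apply (Cmod_signed_quotient_le cq); [lra | apply Hq |]|].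
  { assert (H2 := pow2_le_cbinom (S n)). simpl pow in H2. rewrite S_INR.
    assert (0 <= 2 ^ n) by (apply pow_le; lra). nra. }
  set (s := INR m + INR n + 1).
  assert (Hs : 1 <= s) by (unfold s; lra).
  assert (Hθn : 0 <= wz_ratio ^ n) by (apply pow_le; lra).
  apply Rle_trans with (cq * wz_ratio ^ n * (M * s ^ 2) / s ^ 4).
  { unfold Rdiv. apply Rmult_le_compat_r; [left; apply Rinv_0_lt_compat, pow_lt; lra|].
    apply Rmult_le_compat_l; [nra | apply HMb]. }
  replace (cq * wz_ratio ^ n * (M * s ^ 2) / s ^ 4) with (cq * M * wz_ratio ^ n * / s ^ 2)
    by (field; lra).
  unfold Rdiv. apply Rmult_le_compat_l; [apply Rmult_le_pos; nra|].
  apply Rinv_le_contravar; [lra|]. unfold s. nra.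
Qed.

Lemma wz_partner_bound : exists V, 0 <= V /\ forall k N : nat,
  Cmod (wz_partner a b (alpha + RtoC (INR k)) N) <= V / (INR N + 1) ^ 2.
Proof.
  destruct poch_num_bound as (cq & Hcq & Hq).
  assert (Hal := Cmod_ge_0 alpha). assert (Hθ := wz_ratio_bounds).
  exists (cq * (2 * Cmod alpha + 2)). split; [nra|]. intros k N.
  assert (Hk := pos_INR k). assert (HN := pos_INR N).
  unfold wz_partner.
  eapply Rle_trans; [apply (Cmod_signed_quotient_le cq); [lra | apply Hq | apply pow2_le_cbinom]|].
  set (s := INR k + INR N + 1).
  assert (Hs : 1 <= s) by (unfold s; lra).
  assert (HX : Cmod (2 * (alpha + RtoC (INR k)) + RtoC (INR N)) <= (2 * Cmod alpha + 2) * s).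
  { eapply Rle_trans; [apply Cmod_triangle|]. rewrite Cmod_mult.
    assert (Cmod (alpha + RtoC (INR k)) <= Cmod alpha + INR k) by apply Cmod_add_INR_le.
    rewrite !Cmod_RtoC_nonneg by lra. unfold s. nra. }
  assert (Hθ1 : wz_ratio ^ N <= 1) by (rewrite <- (pow1 N); apply pow_incr; lra).
  assert (Hθ0 : 0 <= wz_ratio ^ N) by (apply pow_le; lra).
  apply Rle_trans with (cq * 1 * ((2 * Cmod alpha + 2) * s) / s ^ 4).
  { unfold Rdiv. apply Rmult_le_compat_r; [left; apply Rinv_0_lt_compat, pow_lt; lra|].
    apply Rmult_le_compat; [nra | apply Cmod_ge_0 | nra | exact HX]. }
  replace (cq * 1 * ((2 * Cmod alpha + 2) * s) / s ^ 4)
    with (cq * (2 * Cmod alpha + 2) * / s ^ 3) by (field; lra).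
  unfold Rdiv. apply Rmult_le_compat_l; [nra|].
  apply Rinv_le_contravar; [nra|]. unfold s. nra.
Qed.

Lemma partial_sum_error_bound : exists c, forall K : nat,
  Cmod (sum_n (fun k => 2 * lhs_term alpha a b k)%C K
        - sum_n (fun n => rhs_term alpha a b (S n)) K) <= c / (INR K + 1).
Proof.
  destruct rhs_term_bound as (W & HW & Hrhs).
  destruct wz_partner_bound as (V & HV & Hcert).
  assert (Hθ := wz_ratio_bounds).
  exists (W / (1 - wz_ratio) + V). intro K.
  assert (HK := pos_INR K).
  rewrite !sum_n_psum, (wz_telescope a b alpha (S K) (S K) Hadm).
  set (B := psum (fun n => rhs_term (alpha + RtoC (INR (S K))) a b (S n)) (S K)).
  set (E := psum (fun k => wz_partner a b (alpha + RtoC (INR k)) (S K)) (S K)).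
  replace (psum (fun n => rhs_term alpha a b (S n)) (S K) - B + E
           - psum (fun n => rhs_term alpha a b (S n)) (S K))%C with (E - B)%C by ring.
  assert (HB : Cmod B <= W / (INR K + 1) / (1 - wz_ratio)).
  { apply Cmod_psum_le_geom; [apply Rdiv_le_0_compat; lra | exact Hθ|].
    intro j. eapply Rle_trans; [apply Hrhs|]. rewrite S_INR.
    assert (0 <= W * wz_ratio ^ j) by (apply Rmult_le_pos; [lra | apply pow_le; lra]).
    unfold Rdiv.
    replace (W * / (INR K + 1) * wz_ratio ^ j) with (W * wz_ratio ^ j * / (INR K + 1)) by ring.
    apply Rmult_le_compat_l; [lra|]. apply Rinv_le_contravar; lra. }
  assert (HE : Cmod E <= V / (INR K + 1)).
  { eapply Rle_trans; [apply Cmod_psum_le_const; intro j; apply Hcert|].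
    rewrite S_INR.
    replace ((INR K + 1) * (V / (INR K + 1 + 1) ^ 2)) with (V * ((INR K + 1) / (INR K + 2) ^ 2))
      by (field; lra).
    replace (V / (INR K + 1)) with (V * / (INR K + 1)) by reflexivity.
    apply Rmult_le_compat_l; [lra|].
    apply Rmult_le_reg_r with ((INR K + 2) ^ 2 * (INR K + 1)); [nra|].
    field_simplify; lra. }
  eapply Rle_trans; [apply Cmod_sub_le|].
  replace ((W / (1 - wz_ratio) + V) / (INR K + 1))
    with (W / (INR K + 1) / (1 - wz_ratio) + V / (INR K + 1)) by (field; lra).
  lra.
Qed.

End Estimates.

Theorem theorem3 (alpha a b : C) :
  (forall m : nat,
      alpha + a <> RtoC (- INR m) /\ alpha - a <> RtoC (- INR m) /\
      alpha + b <> RtoC (- INR m) /\ alpha - b <> RtoC (- INR m)) ->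
  exists L R : C,
    is_series (lhs_term alpha a b) L /\
    is_series (fun m : nat => rhs_term alpha a b (S m)) R /\
    L = R / 2.
Proof.
  intro H.
  assert (Hadm : admissible a b alpha)
    by (repeat split; apply not_nonpos_int_of_neq; intro m; apply H).
  destruct (rhs_term_bound alpha a b Hadm) as (W & _ & Hrhs).
  assert (Hex : ex_series (fun n => rhs_term alpha a b (S n))).
  { apply (ex_series_geom_bound _ W wz_ratio wz_ratio_bounds). intro n.
    specialize (Hrhs 0%nat n). simpl INR in Hrhs.
    now rewrite Cplus_0_r, Rplus_0_l, Rdiv_1_r in Hrhs. }
  destruct Hex as [R HR].
  destruct (partial_sum_error_bound alpha a b Hadm) as (c & Hc).
  exists (R / 2), R. split; [|split; [exact HR | reflexivity]].
  apply (is_series_ext (fun k => / 2 * (2 * lhs_term alpha a b k))).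
  { intro k. rewrite Cmult_assoc, Cinv_l, Cmult_1_l; [reflexivity | apply RtoC_neq0; lra]. }
  replace (R / 2) with (/ 2 * R) by (unfold Cdiv; ring).
  apply (@is_series_scal C_AbsRing C_NormedModule).
  exact (is_series_of_close _ _ R c HR Hc).
Qed.
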